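(* Assume $\alpha=\beta=1$ and let $(U,V,\Lambda)$ be the similarity profile, with $\lambda^*:=\|\Lambda/U\|_{L^\infty}$. Then for every $\tau\ge0$ and all measurable $\rho,\zeta:\mathbb R\to(0,\infty)$ for which $\mathcal I_\Lambda(\rho,\zeta)$ is finite, setting $\mathbf u=(\rho U,\zeta V)$, $$\mathcal I_\Lambda(\rho,\zeta)-e^\tau\mathcal D_{\mathrm{react}}(\rho,\zeta)\le\mu_0e^{-\tau}\mathcal E_{\mathrm B}(\mathbf u|\mathbf U)+K_0e^{-\tau},$$ where $\mu_0=\frac{(\lambda^* )^2e^{\lambda^*/k}}{2k}$ and $K_0=\frac{e^{\lambda^*/k}}{k}\int_{\mathbb R}\frac{\alpha^2\Lambda^2}{U}\mathrm dy$.
   Context: Fix $d_1,d_2,k>0$, real stoichiometric coefficients $\alpha,\beta\ge1$ and $A_-,A_+>0$. The similarity profile is a triple $(U,V,\Lambda)$ with $U,V\in\mathrm C^2(\mathbb R)$ positive, bounded and bounded away from $0$, $\Lambda:\mathbb R\to\mathbb R$, satisfying $d_1U''+\tfrac y2U'+\alpha\Lambda=0$, $d_2V''+\tfrac y2V'-\beta\Lambda=0$, $U^\alpha=V^\beta$ on $\mathbb R$, and $U(\pm\infty)=A_\pm^\beta$, $V(\pm\infty)=A_\pm^\alpha$; $\mathbf U=(U,V)$. $\lambda_{\mathrm B}(z)=z\log z-z+1$; $\mathcal E_{\mathrm B}(\mathbf u|\mathbf U)=\int_{\mathbb R}\big(\lambda_{\mathrm B}(\rho)U+\lambda_{\mathrm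 B}(\zeta)V\big)\mathrm dy$ with $\rho=u/U$, $\zeta=v/V$. $\Gamma(a,b)=(a-b)(\log a-\log b)$ for $a,b>0$, $\Gamma(0,0)=0$, $\Gamma(0,c)=\Gamma(c,0)=\infty$ for $c>0$. Reactive dissipation $\mathcal D_{\mathrm{react}}(\rho,\zeta)=\int_{\mathbb R}kU^\alpha\,\Gamma(\rho^\alpha,\zeta^\beta)\,\mathrm dy$. Mixed term $\mathcal I_\Lambda(\rho,\zeta)=\int_{\mathbb R}\big((1-\rho)\alpha-(1-\zeta)\beta\big)\Lambda\,\mathrm dy$. $\|\cdot\|_{L^\infty}$ is the supremum of the absolute value. *)

From HB Require Import structures.
From mathcomp Require Import all_boot all_order all_algebra.
From mathcomp Require Import all_classical all_reals all_analysis.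
Set Implicit Arguments. Unset Strict Implicit. Unset Printing Implicit Defensive.
Import Order.TTheory GRing.Theory Num.Theory.
Import numFieldNormedType.Exports.
Local Open Scope classical_set_scope.
Local Open Scope ring_scope.

Section Defs.
Variable R : realType.

Definition C2 (f : R -> R) : Prop :=
  (forall x, derivable f x 1) /\ (forall x, derivable (derive1 f) x 1) /\
  continuous (derive1 (derive1 f)).

Definition pos_bdd_away (f : R -> R) : Prop :=
  (exists c : R, 0 < c /\ forall y, c <= f y) /\ (exists M : R, forall y, f y <= M).

Definition similarity_profile (d1 d2 alpha beta Am Ap : R) (U V Lam : R -> R) : Prop :=
  C2 U /\ C2 V /\ pos_bdd_away U /\ pos_bdd_away V /\
  (forall y, d1 * derive1 (derive1 U) y + y / 2 * derive1 U y + alpha * Lam y = 0) /\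
  (forall y, d2 * derive1 (derive1 V) y + y / 2 * derive1 V y - beta * Lam y = 0) /\
  (forall y, U y `^ alpha = V y `^ beta) /\
  U x @[x --> -oo] --> Am `^ beta /\ U x @[x --> +oo] --> Ap `^ beta /\
  V x @[x --> -oo] --> Am `^ alpha /\ V x @[x --> +oo] --> Ap `^ alpha.

Definition lambdaB (z : R) : R := z * ln z - z + 1.

(* Gamma(a,b) = (a-b)(log a - log b), used only for a,b > 0 *)
Definition GammaL (a b : R) : R := (a - b) * (ln a - ln b).

Local Notation leb := (@lebesgue_measure R).

Definition EB (U V u v : R -> R) : \bar R :=
  (\int[leb]_(y in setT) (lambdaB (u y / U y) * U y + lambdaB (v y / V y) * V y)%:E)%E.

Definition Dreact (k alpha beta : R) (U rho zeta : R -> R) : \bar R :=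
  (\int[leb]_(y in setT) (k * U y `^ alpha * GammaL (rho y `^ alpha) (zeta y `^ beta))%:E)%E.

Definition ILam_integrand (alpha beta : R) (Lam rho zeta : R -> R) (y : R) : R :=
  ((1 - rho y) * alpha - (1 - zeta y) * beta) * Lam y.

Definition ILam (alpha beta : R) (Lam rho zeta : R -> R) : \bar R :=
  (\int[leb]_(y in setT) (ILam_integrand alpha beta Lam rho zeta y)%:E)%E.

(* lambda^* = || Lambda / U ||_{L^infty}; Lambda/U is continuous, so the
   essential supremum equals the supremum *)
Definition lambda_star (U Lam : R -> R) : R :=
  sup [set `|Lam y / U y| | y in [set: R]].

End Defs.

From HB Require Import structures.
From mathcomp Require Import all_boot all_order all_algebra.
From mathcomp Require Import all_classical all_reals all_analysis.
From mathcomp Require Import measurable_realfun ring lra.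
Import Order.TTheory GRing.Theory Num.Theory.
Import numFieldNormedType.Exports.
Local Open Scope classical_set_scope.
Local Open Scope ring_scope.

(* For unit coefficients the constraint U^alpha = V^beta gives V = U, and adding
   the two profile equations yields (d1 + d2) U'' + y U' = 0, so U' is a Gaussian
   and Lambda = (d1/(d1+d2) - 1/2) y U'(y) is bounded.  As U is bounded away
   from 0, |Lambda/U| <= lambda^* everywhere.  The theorem then follows by
   integrating a pointwise inequality: with s = e^tau, a = rho, b = zeta,
     (b - a) Lambda <= s k U Gamma(a,b) + mu0/s (lambdaB(a) + lambdaB(b)) U
                       + e^(lambda^*/k)/(k s) Lambda^2/U,
   obtained from Young's inequality, (a - b)^2 <= (a + b) Gamma(a, b) and
   a <= 2 lambdaB(a) + 2. *)

Section ElementaryInequalities.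
Context {R : realType}.
Implicit Types a b x : R.

Lemma ln_le_subr1 {x} : 0 < x -> ln x <= x - 1.
Proof.
move=> x0; have := @le_ln1Dx R (x - 1).
by rewrite addrCA subrr addr0; apply; lra.
Qed.

(* The same bound applied to 1/x: x ln x dominates x - 1. *)
Lemma subr1_le_mul_ln {x} : 0 < x -> x - 1 <= x * ln x.
Proof.
move=> x0; have x0i : 0 < x^-1 by rewrite invr_gt0.
have := ln_le_subr1 x0i.
rewrite lnV ?posrE // => h.
have : x * (- ln x) <= x * (x^-1 - 1) by rewrite ler_pM2l.
rewrite mulrBr mulfV ?gt_eqF //; lra.
Qed.

Lemma lambdaB_ge0 {a} : 0 < a -> 0 <= lambdaB a.
Proof. by move=> a0; have := subr1_le_mul_ln a0; rewrite /lambdaB; lra. Qed.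

(* The Boltzmann function grows at least linearly: a <= 2 lambdaB(a) + 2.
   Writing a = t^2, this is t^2 <= 4 t^2 ln t - 2 t^2 + 4, which follows from
   t ln t >= t - 1 and (t - 2)^2 >= 0. *)
Lemma le_lambdaB {a} : 0 < a -> a <= 2 * lambdaB a + 2.
Proof.
move=> a0; set t := Num.sqrt a.
have t0 : 0 < t by rewrite sqrtr_gt0.
have at2 : a = t * t by rewrite -expr2 sqr_sqrtr // ltW.
have ln_a : ln a = ln t + ln t by rewrite at2 lnM ?posrE.
have t_lnt : t * (t - 1) <= t * (t * ln t) by rewrite ler_pM2l // subr1_le_mul_ln.
have sq : 0 <= (t - 2) ^+ 2 by apply: sqr_ge0.
rewrite /lambdaB ln_a at2.
have -> : t * t * (ln t + ln t) = 2 * (t * (t * ln t)) by ring.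
nra.
Qed.

(* The logarithmic mean sits between min and max, in multiplicative form:
   b (ln a - ln b) <= a - b <= a (ln a - ln b). *)
Lemma mul_ln_sub_bounds {a b} : 0 < a -> 0 < b ->
  b * (ln a - ln b) <= a - b <= a * (ln a - ln b).
Proof.
move=> a0 b0; apply/andP; split.
- have := ln_le_subr1 (divr_gt0 a0 b0).
  rewrite lnM ?posrE ?invr_gt0 // lnV ?posrE // => h.
  have -> : a - b = b * (a / b - 1) by field; rewrite gt_eqF.
  by rewrite ler_pM2l.
- have := ln_le_subr1 (divr_gt0 b0 a0).
  rewrite lnM ?posrE ?invr_gt0 // lnV ?posrE // => h.
  have : a * (ln b - ln a) <= a * (b / a - 1) by rewrite ler_pM2l.
  have -> : a * (b / a - 1) = b - a by field; rewrite gt_eqF.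
  lra.
Qed.

Lemma GammaL_ge0 {a b} : 0 < a -> 0 < b -> 0 <= GammaL a b.
Proof.
move=> a0 b0; rewrite /GammaL; have [ba|ab] := lerP b a.
  by rewrite mulr_ge0 ?subr_ge0 // ler_ln ?posrE.
by apply: mulr_le0; rewrite subr_le0 ?ler_ln ?posrE // ltW.
Qed.

Lemma sqr_sub_le_GammaL {a b} : 0 < a -> 0 < b -> (a - b) ^+ 2 <= (a + b) * GammaL a b.
Proof.
move=> a0 b0; have /andP[lo hi] := mul_ln_sub_bounds a0 b0.
rewrite /GammaL; set d := ln a - ln b in lo hi *.
have [ba|ab] := lerP b a.
  have d0 : 0 <= d by rewrite -(pmulr_rge0 _ a0); lra.
  nra.
have d0 : d <= 0 by rewrite -(pmulr_rle0 _ b0); lra.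
nra.
Qed.

Lemma young_weighted (c m x y : R) : 0 < c -> 0 < m ->
  x * y <= c * x ^+ 2 / m + m * y ^+ 2 / (4 * c).
Proof.
move=> c0 m0; rewrite -subr_ge0.
have -> : c * x ^+ 2 / m + m * y ^+ 2 / (4 * c) - x * y
    = (c * x - m * y / 2) ^+ 2 / (m * c) by field; rewrite !gt_eqF.
by rewrite divr_ge0 ?sqr_ge0 // mulr_ge0 // ltW.
Qed.

Lemma reaction_pointwise_bound (s k u L E a b Lam : R) :
  0 < s -> 0 < k -> 0 < u -> 0 < a -> 0 < b -> 1 <= E -> `|Lam / u| <= L ->
  (b - a) * Lam <= s * (k * u * GammaL a b)
   + (L ^+ 2 * E / (2 * k) * s^-1) * (lambdaB a * u + lambdaB b * u)
   + (E / k * s^-1) * (Lam ^+ 2 / u).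
Proof.
move=> s0 k0 u0 a0 b0 E1 hL.
set m := a + b; set c := s * k * u; set la := lambdaB a; set lb := lambdaB b.
have m0 : 0 < m by rewrite addr_gt0.
have c0 : 0 < c by rewrite !mulr_gt0.
have young : (b - a) * Lam <= c * (a - b) ^+ 2 / m + m * Lam ^+ 2 / (4 * c).
  by rewrite -sqrrN opprB; exact: young_weighted.
have react : c * (a - b) ^+ 2 / m <= s * (k * u * GammaL a b).
  have -> : s * (k * u * GammaL a b) = c / m * (m * GammaL a b).
    by rewrite /c; field; rewrite gt_eqF.
  by rewrite mulrAC ler_wpM2l ?sqr_sub_le_GammaL // divr_ge0 // ltW.
have Lam2 : Lam ^+ 2 <= L ^+ 2 * u ^+ 2.
  have hL' : `|Lam| <= L * u by rewrite -ler_pdivrMr // -(gtr0_norm u0) -normfV -normrM.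
  rewrite -exprMn -real_normK ?num_real // ler_sqr ?nnegrE //.
  exact: le_trans hL'.
have mle : m <= 2 * la + 2 * lb + 4.
  by have := le_lambdaB a0; have := le_lambdaB b0; rewrite /m /la /lb; lra.
have la0 : 0 <= la := lambdaB_ge0 a0.
have lb0 : 0 <= lb := lambdaB_ge0 b0.
have entropy : m * Lam ^+ 2 / (4 * c) <=
    (L ^+ 2 * E / (2 * k) * s^-1) * (la * u + lb * u) + (E / k * s^-1) * (Lam ^+ 2 / u).
  have -> : (L ^+ 2 * E / (2 * k) * s^-1) * (la * u + lb * u) + (E / k * s^-1) * (Lam ^+ 2 / u)
      = (2 * E * (la + lb) * (L ^+ 2 * u ^+ 2) + 4 * E * Lam ^+ 2) / (4 * c).
    by rewrite /c; field; rewrite !gt_eqF.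
  rewrite ler_pM2r ?invr_gt0 ?mulr_gt0 //.
  have L0 : 0 <= Lam ^+ 2 := sqr_ge0 Lam.
  have l0 : 0 <= la + lb by rewrite addr_ge0.
  have h1 : m * Lam ^+ 2 <= (2 * la + 2 * lb + 4) * Lam ^+ 2 by rewrite ler_wpM2r.
  have h2 : (la + lb) * Lam ^+ 2 <= (la + lb) * (L ^+ 2 * u ^+ 2) by rewrite ler_wpM2l.
  have h3 : (la + lb) * (L ^+ 2 * u ^+ 2) <= E * ((la + lb) * (L ^+ 2 * u ^+ 2)).
    by rewrite ler_peMl // mulr_ge0 // (le_trans L0 Lam2).
  have h4 : Lam ^+ 2 <= E * Lam ^+ 2 by rewrite ler_peMl.
  nra.
lra.
Qed.

End ElementaryInequalities.

Section IntegralComparison.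
Context {d : measure_display} {T : measurableType d} {R : realType}.
Variable mu : {measure set T -> \bar R}.
Local Open Scope ereal_scope.

(* Integrating a pointwise bound f <= s g + c1 h + c2 l, with f integrable and
   g, h, l nonnegative and measurable, yields the same bound for the integrals
   once the s g part is moved to the left-hand side; the integral of g may be
   infinite, in which case the left-hand side is -oo. *)
Lemma integral_sub_le_comb (f g h l : T -> R) (s c1 c2 : R) :
  (0 < s)%R -> (0 <= c1)%R -> (0 <= c2)%R ->
  measurable_fun [set: T] g -> measurable_fun [set: T] h -> measurable_fun [set: T] l ->
  (forall y, 0 <= g y)%R -> (forall y, 0 <= h y)%R -> (forall y, 0 <= l y)%R ->
  mu.-integrable [set: T] (EFin \o f) ->
  (forall y, f y <= s * g y + c1 * h y + c2 * l y)%R ->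
  \int[mu]_(y in [set: T]) (f y)%:E - s%:E * \int[mu]_(y in [set: T]) (g y)%:E
   <= c1%:E * \int[mu]_(y in [set: T]) (h y)%:E + c2%:E * \int[mu]_(y in [set: T]) (l y)%:E.
Proof.
move=> s_gt0 c10 c20 mg mh ml g0 h0 l0 fi fle; have s0 := ltW s_gt0.
have mgE : measurable_fun [set: T] (EFin \o g : T -> \bar R) by exact/measurable_EFinP.
have mhE : measurable_fun [set: T] (EFin \o h : T -> \bar R) by exact/measurable_EFinP.
have mlE : measurable_fun [set: T] (EFin \o l : T -> \bar R) by exact/measurable_EFinP.
have le_pos : \int[mu]_(y in [set: T]) (f y)%:E <=
    \int[mu]_(y in [set: T]) ((EFin \o f)^\+ y).
  rewrite [leLHS]integralE leeBlDr; last exact: integrable_neg_fin_num.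
  by rewrite leeDl // integral_ge0 // => y _; exact: funeneg_ge0.
have pos_le : \int[mu]_(y in [set: T]) ((EFin \o f)^\+ y) <=
    \int[mu]_(y in [set: T]) (s%:E * (g y)%:E + c1%:E * (h y)%:E + c2%:E * (l y)%:E).
  apply: (ge0_le_integral mu measurableT).
  - by move=> y _; exact: funepos_ge0.
  - by apply: measurable_funepos; exact: measurable_int fi.
  - by apply: emeasurable_funD; [apply: emeasurable_funD|]; exact: measurable_funeM.
  - move=> y _; rewrite funeposE -!EFinM -!EFinD ge_max !lee_fin fle /=.
    by rewrite !addr_ge0 // mulr_ge0.
have linear_comb : \int[mu]_(y in [set: T]) (s%:E * (g y)%:E + c1%:E * (h y)%:E + c2%:E * (l y)%:E)
    = s%:E * \int[mu]_(y in [set: T]) (g y)%:E + c1%:E * \int[mu]_(y in [set: T]) (h y)%:E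
      + c2%:E * \int[mu]_(y in [set: T]) (l y)%:E.
  have term_ge0 c (F : T -> R) : (0 <= c)%R -> (forall y, 0 <= F y)%R ->
      forall y, [set: T] y -> 0 <= c%:E * (F y)%:E.
    by move=> c0 F0 y _; rewrite mule_ge0 // lee_fin.
  rewrite ge0_integralD //; last 4 first.
  - by move=> y _; rewrite adde_ge0 // term_ge0.
  - by apply: emeasurable_funD; exact: measurable_funeM.
  - exact: term_ge0.
  - exact: measurable_funeM.
  rewrite ge0_integralD //; try exact: measurable_funeM; try exact: term_ge0.
  by rewrite !ge0_integralZl // => y _; rewrite lee_fin.
have := le_trans le_pos pos_le; rewrite linear_comb.
have If_fin : \int[mu]_(y in [set: T]) (f y)%:E \is a fin_num by exact: integrable_fin_num.
have Ig0 : 0 <= \int[mu]_(y in [set: T]) (g y)%:E by apply: integral_ge0 => y _; rewrite lee_fin.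
move: If_fin Ig0; set IG := \int[mu]_(_ in _) (g _)%:E; set IF := \int[mu]_(_ in _) (f _)%:E.
case: IG => [r| |] // IF_fin _ bound.
- by rewrite -EFinM leeBlDl // addeA EFinM.
- rewrite gt0_muley ?lte_fin //; move: IF_fin {bound}.
  by case: IF => [x _| |] //=; rewrite leNye.
Qed.

End IntegralComparison.

Section MixedTermEstimate.
Context {R : realType}.
Local Notation leb := (@lebesgue_measure R).

Lemma measurable_lambdaB : measurable_fun [set: R] (@lambdaB R).
Proof.
rewrite /lambdaB; apply: measurable_funD; last exact: measurable_cst.
apply: measurable_funB => //.
by apply: measurable_funM => //; exact: measurable_ln.
Qed.

Lemma mixed_term_estimate {k s L : R} {U Lam rho zeta : R -> R} :
  0 < k -> 0 < s ->
  continuous U -> continuous Lam -> (forall y, 0 < U y) ->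
  (forall y, `|Lam y / U y| <= L) ->
  measurable_fun [set: R] rho -> measurable_fun [set: R] zeta ->
  (forall y, 0 < rho y) -> (forall y, 0 < zeta y) ->
  leb.-integrable [set: R] (fun y => (ILam_integrand 1 1 Lam rho zeta y)%:E) ->
  (ILam 1 1 Lam rho zeta - s%:E * Dreact k 1 1 U rho zeta
   <= (L ^+ 2 * expR (L / k) / (2 * k) * s^-1)%:E
        * EB U U (fun y => (rho y * U y)%R) (fun y => (zeta y * U y)%R)
      + (expR (L / k) / k * s^-1)%:E
        * \int[leb]_(y in [set: R]) (1 ^+ 2 * Lam y ^+ 2 / U y)%:E)%E.
Proof.
move=> k0 s0 cU cLam U0 ratio mrho mzeta rho0 zeta0 fi.
have mU := continuous_measurable_fun cU.
have mLam := continuous_measurable_fun cLam.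
have mUinv : measurable_fun [set: R] (fun y => (U y)^-1).
  by apply: continuous_measurable_fun => y; apply: continuousV; [rewrite gt_eqF | exact: cU].
have L0 : 0 <= L := le_trans (normr_ge0 _) (ratio 0).
have E1 : 1 <= expR (L / k) by rewrite -expR0 ler_expR divr_ge0 // ltW.
have reactE y : k * U y `^ 1 * GammaL (rho y `^ 1) (zeta y `^ 1)
    = k * U y * GammaL (rho y) (zeta y).
  by rewrite !powRr1 // ltW.
have entropyE y : lambdaB (rho y * U y / U y) * U y + lambdaB (zeta y * U y / U y) * U y
    = lambdaB (rho y) * U y + lambdaB (zeta y) * U y.
  by rewrite !mulfK // gt_eqF.
have mln (f : R -> R) : measurable_fun [set: R] f -> measurable_fun [set: R] (fun y => ln (f y)).
  by move=> mf; apply: measurableT_comp => //; exact: measurable_ln.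
apply: integral_sub_le_comb.
- exact: s0.
- by rewrite !mulr_ge0 ?sqr_ge0 ?expR_ge0 // ?invr_ge0 ?mulr_ge0 // ltW.
- by rewrite !mulr_ge0 ?expR_ge0 // invr_ge0 ltW.
- rewrite (funext reactE); apply: measurable_funM; first exact: measurable_funM.
  by apply: measurable_funM; apply: measurable_funB => //; exact: mln.
- rewrite (funext entropyE); apply: measurable_funD; apply: measurable_funM => //;
    exact: measurableT_comp measurable_lambdaB _.
- apply: measurable_funM; last exact: mUinv.
  by apply: measurable_funM => //; exact: measurable_funX.
- by move=> y; rewrite reactE mulr_ge0 ?GammaL_ge0 // mulr_ge0 // ltW.
- by move=> y; rewrite entropyE addr_ge0 // mulr_ge0 ?lambdaB_ge0 // ltW.
- by move=> y; apply: divr_ge0; [apply: mulr_ge0; exact: sqr_ge0 | exact: ltW].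
- exact: fi.
- move=> y; rewrite /ILam_integrand reactE entropyE /= expr1n mul1r.
  rewrite !mulr1 (_ : 1 - rho y - (1 - zeta y) = zeta y - rho y); last by ring.
  exact: reaction_pointwise_bound.
Qed.

End MixedTermEstimate.

Section SimilarityProfile.
Context {R : realType}.

(* A C^1 solution of D P' + y P = 0 is the Gaussian P(0) exp(-y^2/(2D)): the
   product P(y) exp(y^2/(2D)) has zero derivative, hence is constant. *)
Lemma gaussian_of_linear_ode {D : R} {P Q : R -> R} : 0 < D ->
  (forall x, is_derive x (1 : R) P (Q x)) ->
  (forall y, D * Q y + y * P y = 0) ->
  forall y, P y = P 0 * expR (- (y ^+ 2 / (2 * D))).
Proof.
move=> D0 dP ode.
set w := (2 * D)^-1.
pose h : R -> R := w \*: ((id : R -> R) * id).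
pose g : R -> R := P * (expR \o h).
have hE y : h y = y ^+ 2 / (2 * D).
  by rewrite /h; change (w * (y * y) = y ^+ 2 / (2 * D)); rewrite expr2 mulrC.
have dg x : is_derive x (1 : R) g 0.
  have dh : is_derive x (1 : R) h (w *: (x *: 1 + x *: 1)).
    by apply: is_deriveZ; apply: is_deriveM.
  have de : is_derive x (1 : R) (expR \o h) (expR (h x) * (w *: (x *: 1 + x *: 1))).
    exact: is_derive1_comp.
  apply: (is_derive_eq (is_deriveM (dP x) de)).
  change (P x * (expR (h x) * (w * (x * 1 + x * 1))) + expR (h x) * Q x = 0).
  have -> : Q x = - (x * P x) / D.
    apply: (@mulfI _ D); first by rewrite gt_eqF.
    by rewrite [RHS]mulrC divfK ?gt_eqF //; have := ode x; lra.
  by rewrite /w; field; rewrite gt_eqF.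
move=> y; have := is_derive_0_is_cst y 0 dg.
rewrite /g; change (P y * expR (h y) = P 0 * expR (h 0) -> P y = P 0 * expR (- (y ^+ 2 / (2 * D)))).
rewrite !hE expr0n /= mul0r expR0 mulr1 => <-.
by rewrite -mulrA -expRD addrN expR0 mulr1.
Qed.

(* The first moment of a Gaussian profile is bounded: |y| e^(-y^2/(2D)) <= 1 + 2D,
   since |y| <= 1 + y^2 and 1 + z <= e^z. *)
Lemma abs_mul_gaussian_le (D y : R) : 0 < D ->
  `|y| * expR (- (y ^+ 2 / (2 * D))) <= 1 + 2 * D.
Proof.
move=> D0; set z := y ^+ 2 / (2 * D).
have z0 : 0 <= z by rewrite divr_ge0 ?sqr_ge0 // mulr_ge0 // ltW.
have yz : y ^+ 2 = 2 * D * z by rewrite /z mulrC divfK // mulf_neq0 // gt_eqF.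
have y_le : `|y| <= 1 + y ^+ 2.
  have sq : 0 <= (`|y| - 1) ^+ 2 by apply: sqr_ge0.
  have n2 : `|y| ^+ 2 = y ^+ 2 by rewrite real_normK ?num_real.
  have := normr_ge0 y; nra.
have y_le_exp : `|y| <= (1 + 2 * D) * expR z.
  apply: (le_trans y_le); apply: (le_trans _ (ler_wpM2l _ (expR_ge1Dx z))).
    by rewrite yz; nra.
  by rewrite addr_ge0 // mulr_ge0 // ltW.
by rewrite expRN ler_pdivrMr ?expR_gt0.
Qed.

(* lambda^* dominates |Lambda/U| pointwise as soon as Lambda is bounded and U
   is bounded away from 0, since the supremum is then taken over a bounded set. *)
Lemma le_lambda_star {U Lam : R -> R} {c B : R} : 0 < c ->
  (forall y, c <= U y) -> (forall y, `|Lam y| <= B) ->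
  forall y, `|Lam y / U y| <= lambda_star U Lam.
Proof.
move=> c0 cU LamB y; apply: ub_le_sup; last by exists y.
exists (B / c) => _ [x _ <-].
have Ux0 : 0 < U x := lt_le_trans c0 (cU x).
rewrite normrM normfV (gtr0_norm Ux0) ler_pdivrMr //.
apply: (le_trans (LamB x)).
have B0 : 0 <= B := le_trans (normr_ge0 _) (LamB x).
by rewrite mulrAC ler_pdivlMr // ler_wpM2l.
Qed.

Context {d1 d2 Am Ap : R} {U V Lam : R -> R}.
Hypotheses (d1_gt0 : 0 < d1) (d2_gt0 : 0 < d2).
Hypothesis profile : similarity_profile d1 d2 1 1 Am Ap U V Lam.

Let D := d1 + d2.
Let D_gt0 : 0 < D. Proof. exact: addr_gt0. Qed.

Lemma profile_lower_bound : exists2 c : R, 0 < c & forall y, c <= U y.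
Proof. by have [_ [_ [[[c [c0 cU]] _] _]]] := profile; exists c. Qed.

Lemma profile_U_gt0 y : 0 < U y.
Proof. by have [c c0 cU] := profile_lower_bound; exact: lt_le_trans (cU y). Qed.

Lemma profile_V_eq_U : V = U.
Proof.
have [_ [_ [_ [[[c [c0 cV]] _] [_ [_ [eUV _]]]]]]] := profile.
apply/funext => y; have := eUV y.
by rewrite !powRr1 // ltW // ?(lt_le_trans c0 (cV y)) ?profile_U_gt0.
Qed.

Lemma profile_is_derive x : is_derive x (1 : R) (derive1 U) (derive1 (derive1 U) x).
Proof.
have [[_ [dU' _]] _] := profile.
by rewrite derive1E; apply: derivableP; exact: dU'.
Qed.

(* Adding the two profile equations eliminates Lambda: D U'' + y U' = 0. *)
Lemma profile_linear_ode y : D * derive1 (derive1 U) y + y * derive1 U y = 0.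
Proof.
have [_ [_ [_ [_ [e1 [e2 _]]]]]] := profile.
have := e1 y; have := e2 y; rewrite profile_V_eq_U !mul1r /D; lra.
Qed.

Lemma profile_Lambda_eq y : Lam y = (d1 / D - 1 / 2) * (y * derive1 U y).
Proof.
have [_ [_ [_ [_ [e1 _]]]]] := profile.
have Q_eq : derive1 (derive1 U) y = - (y * derive1 U y) / D.
  apply: (@mulfI _ D); first by rewrite gt_eqF.
  by rewrite [RHS]mulrC divfK ?gt_eqF //; have := profile_linear_ode y; lra.
have := e1 y; rewrite mul1r Q_eq => e1y.
have -> : Lam y = - (d1 * (- (y * derive1 U y) / D) + y / 2 * derive1 U y) by lra.
by field; rewrite gt_eqF.
Qed.

(* Consequently Lambda is a bounded Gaussian first moment. *)
Lemma profile_Lambda_bounded : exists B : R, forall y, `|Lam y| <= B.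
Proof.
exists (`|d1 / D - 1 / 2| * (`|derive1 U 0| * (1 + 2 * D))) => y.
rewrite profile_Lambda_eq normrM ler_wpM2l //.
rewrite (gaussian_of_linear_ode D_gt0 profile_is_derive profile_linear_ode y).
rewrite mulrCA normrM ler_wpM2l // normrM [`|expR _|]ger0_norm ?expR_ge0 //.
exact: abs_mul_gaussian_le.
Qed.

Lemma profile_continuous_U : continuous U.
Proof.
have [[dU _] _] := profile.
by move=> x; apply/differentiable_continuous/derivable1_diffP/dU.
Qed.

Lemma profile_continuous_Lambda : continuous Lam.
Proof.
have [[_ [dU' cU'']] [_ [_ [_ [e1 _]]]]] := profile.
have -> : Lam = fun y => - (d1 * derive1 (derive1 U) y + y / 2 * derive1 U y).
  by apply/funext => y; have := e1 y; rewrite mul1r; lra.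
move=> x; apply: cvgN; apply: cvgD.
  by apply: cvgM; [exact: cvg_cst | exact: cU''].
apply: cvgM; first by apply: cvgM; [exact: cvg_id | exact: cvg_cst].
by apply/differentiable_continuous/derivable1_diffP/dU'.
Qed.

Lemma profile_ratio_le_lambda_star y : `|Lam y / U y| <= lambda_star U Lam.
Proof.
have [c c0 cU] := profile_lower_bound; have [B LamB] := profile_Lambda_bounded.
exact: le_lambda_star c0 cU LamB y.
Qed.

End SimilarityProfile.

Theorem mainTheorem11 (R : realType) (d1 d2 k alpha beta Am Ap : R)
  (U V Lam : R -> R) :
  0 < d1 -> 0 < d2 -> 0 < k -> 0 < Am -> 0 < Ap ->
  alpha = 1 -> beta = 1 ->
  similarity_profile d1 d2 alpha beta Am Ap U V Lam ->
  forall (tau : R) (rho zeta : R -> R),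
    0 <= tau ->
    measurable_fun [set: R] rho -> measurable_fun [set: R] zeta ->
    (forall y, 0 < rho y) -> (forall y, 0 < zeta y) ->
    (@lebesgue_measure R).-integrable [set: R]
      (fun y => (ILam_integrand alpha beta Lam rho zeta y)%:E) ->
    let ls := lambda_star U Lam in
    let mu0 := ls ^+ 2 * expR (ls / k) / (2 * k) in
    let K0 := ((expR (ls / k) / k)%:E *
               \int[@lebesgue_measure R]_(y in [set: R])
                  (alpha ^+ 2 * Lam y ^+ 2 / U y)%:E)%E in
    (ILam alpha beta Lam rho zeta - (expR tau)%:E * Dreact k alpha beta U rho zeta
      <= (mu0 * expR (- tau))%:E * EB U V (fun y => (rho y * U y)%R) (fun y => (zeta y * V y)%R)
         + K0 * (expR (- tau))%:E)%E.
Proof.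
move=> d1_gt0 d2_gt0 k_gt0 _ _ -> -> profile tau rho zeta _ mrho mzeta rho0 zeta0 ILam_int.
cbv zeta; rewrite (profile_V_eq_U profile) muleAC -EFinM expRN.
exact: (mixed_term_estimate k_gt0 (expR_gt0 tau) (profile_continuous_U profile)
  (profile_continuous_Lambda profile) (profile_U_gt0 profile)
  (profile_ratio_le_lambda_star d1_gt0 d2_gt0 profile)
  mrho mzeta rho0 zeta0 ILam_int).
Qed.
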